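(* In the two-bus model of the context, let $\Omega$ be the set of all instances $\boldsymbol\omega=(\overline{\mathbf q},\mathbf d)$ with $\overline{\mathbf q},\mathbf d\ge 0$, $d_1+d_2>0$, that are feasible for both \textsf{ED-2b} and \textsf{SCED-2b}. Then $$\mathsf{PoS}:=\sup_{\boldsymbol\omega\in\Omega}\mathsf{PoS}(\boldsymbol\omega)=\frac{\alpha_2}{\alpha_1}-\frac{(\alpha_2-\alpha_1)f^{\mathsf{sc}}}{\alpha_1 f^{\mathsf{ed}}},$$ and this value is attained by any instance with $d_1=0$, $d_2=f^{\mathsf{ed}}$, $\overline q_1\ge f^{\mathsf{ed}}$, and $\overline q_2\ge f^{\mathsf{ed}}-f^{\mathsf{sc}}$.
   Context: Two-bus network: buses $v_1,v_2$ joined by two parallel lines $e_1,e_2$ with susceptances $B_1,B_2>0$ and thermal limits $\overline f_1,\overline f_2>0$. Bus $i\in\{1,2\}$ has a generator with capacity $\overline q_i\ge 0$ and linear cost $\alpha_i q_i$, and a demand $d_i\ge 0$; throughout $0<\alpha_1\le\alpha_2$ (bus 1 is the cheap bus). An instance is $\boldsymbol\omega=(\overline{\mathbf q},\mathbf d)$ with $\overline{\mathbf q}=(\overline q_1,\overline q_2)$, $\mathbf d=(d_1,d_2)$. Define $f^{\mathsf{ed}}:=(B_1+B_2)\min\{\overline f_1/B_1,\overline f_2/B_2\}$ and $f^{\mathsf{sc}}:=\min\{\overline f_1,\overline f_2\}$ (note $f^{\mathsf{sc}}\le f^{\mathsf{ed}}$). The economic dispatch problem \textsf{ED-2b} is: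 minimize $\alpha_1q_1+\alpha_2q_2$ over $(q_1,q_2)$ subject to $0\le q_1\le\overline q_1$, $0\le q_2\le\overline q_2$, $q_1+q_2=d_1+d_2$, and $-f^{\mathsf{ed}}\le q_1-d_1\le f^{\mathsf{ed}}$. The security-constrained problem \textsf{SCED-2b} is the same problem with the additional constraint $-f^{\mathsf{sc}}\le q_1-d_1\le f^{\mathsf{sc}}$. Let $c^\star_{\mathsf{ed}}(\boldsymbol\omega)$ and $c^\star_{\mathsf{sc}}(\boldsymbol\omega)$ be the optimal values of \textsf{ED-2b} and \textsf{SCED-2b} for an instance $\boldsymbol\omega$ feasible for both. The price of security of $\boldsymbol\omega$ is $\mathsf{PoS}(\boldsymbol\omega):=c^\star_{\mathsf{sc}}(\boldsymbol\omega)/c^\star_{\mathsf{ed}}(\boldsymbol\omega)$. *)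

From Stdlib Require Import Reals Lra.
Open Scope R_scope.

Definition f_ed (B1 B2 fb1 fb2 : R) : R := (B1 + B2) * Rmin (fb1 / B1) (fb2 / B2).
Definition f_sc (fb1 fb2 : R) : R := Rmin fb1 fb2.

Definition cost (a1 a2 q1 q2 : R) : R := a1 * q1 + a2 * q2.

Definition ed_feasible (fed qb1 qb2 d1 d2 q1 q2 : R) : Prop :=
  0 <= q1 <= qb1 /\ 0 <= q2 <= qb2 /\ q1 + q2 = d1 + d2 /\
  - fed <= q1 - d1 <= fed.

Definition sced_feasible (fed fsc qb1 qb2 d1 d2 q1 q2 : R) : Prop :=
  ed_feasible fed qb1 qb2 d1 d2 q1 q2 /\ - fsc <= q1 - d1 <= fsc.

Definition is_opt_value (feas : R -> R -> Prop) (cst : R -> R -> R) (c : R) : Prop :=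
  (exists q1 q2, feas q1 q2 /\ cst q1 q2 = c) /\
  (forall q1 q2, feas q1 q2 -> c <= cst q1 q2).

Definition is_feasible (feas : R -> R -> Prop) : Prop := exists q1 q2, feas q1 q2.

Definition in_Omega (fed fsc qb1 qb2 d1 d2 : R) : Prop :=
  0 <= qb1 /\ 0 <= qb2 /\ 0 <= d1 /\ 0 <= d2 /\ d1 + d2 > 0 /\
  is_feasible (ed_feasible fed qb1 qb2 d1 d2) /\
  is_feasible (sced_feasible fed fsc qb1 qb2 d1 d2).

Definition PoS_is (a1 a2 fed fsc qb1 qb2 d1 d2 p : R) : Prop :=
  exists csc ced,
    is_opt_value (sced_feasible fed fsc qb1 qb2 d1 d2) (cost a1 a2) csc /\
    is_opt_value (ed_feasible fed qb1 qb2 d1 d2) (cost a1 a2) ced /\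
    p = csc / ced.

(* Along the balance line q1 + q2 = d1 + d2 the cost is a1 d1 + a2 d2 - (a2 - a1) x, where
   x = q1 - d1 is the export of the cheap bus, so both problems push x as far up as their
   line limit allows. Compared with an ED optimum exporting x, SCED can always export at
   least min(x, f^sc); the worst ratio of the two affine costs over 0 <= x <= f^ed is reached
   with no cheap demand, all demand at bus 2 and x = f^ed, giving the stated value. *)
From Stdlib Require Import Reals Lra.
Open Scope R_scope.

Lemma le_scaled_line_limit (B B' f : R) :
  0 < B -> 0 < B' -> 0 < f -> f <= (B + B') * (f / B).
Proof.
  intros hB hB' hf.
  replace ((B + B') * (f / B)) with (f + B' * (f / B)) by (field; lra).
  assert (0 < f / B) by (apply Rdiv_lt_0_compat; lra).
  nra.
Qed.

Lemma f_sc_pos (fb1 fb2 : R) : 0 < fb1 -> 0 < fb2 -> 0 < f_sc fb1 fb2.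
Proof. intros; unfold f_sc, Rmin; destruct (Rle_dec fb1 fb2); lra. Qed.

Lemma f_sc_le_f_ed (B1 B2 fb1 fb2 : R) :
  0 < B1 -> 0 < B2 -> 0 < fb1 -> 0 < fb2 -> f_sc fb1 fb2 <= f_ed B1 B2 fb1 fb2.
Proof.
  intros hB1 hB2 hf1 hf2; unfold f_sc, f_ed.
  pose proof (Rmin_l fb1 fb2); pose proof (Rmin_r fb1 fb2).
  unfold Rmin at 2; destruct (Rle_dec (fb1 / B1) (fb2 / B2)).
  - pose proof (le_scaled_line_limit B1 B2 fb1); lra.
  - rewrite (Rplus_comm B1 B2); pose proof (le_scaled_line_limit B2 B1 fb2); lra.
Qed.

Lemma cost_balanced (a1 a2 d1 d2 q1 q2 : R) :
  q1 + q2 = d1 + d2 -> cost a1 a2 q1 q2 = a1 * d1 + a2 * d2 - (a2 - a1) * (q1 - d1).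
Proof. intros; unfold cost; replace q2 with (d1 + d2 - q1) by lra; ring. Qed.

Lemma is_opt_value_max_cheap (feas : R -> R -> Prop) (a1 a2 D q1 q2 : R) :
  a1 <= a2 -> feas q1 q2 ->
  (forall p1 p2, feas p1 p2 -> p1 + p2 = D /\ p1 <= q1) ->
  is_opt_value feas (cost a1 a2) (cost a1 a2 q1 q2).
Proof.
  intros ha hq hmax; split; [now exists q1, q2|].
  intros p1 p2 hp.
  destruct (hmax _ _ hp) as [hpD hp1]; destruct (hmax _ _ hq) as [hqD _].
  unfold cost; replace p2 with (D - p1) by lra; replace q2 with (D - q1) by lra; nra.
Qed.

Lemma sced_export_ge_min (fed fsc qb1 qb2 d1 d2 e1 e2 : R) :
  0 <= fsc -> ed_feasible fed qb1 qb2 d1 d2 e1 e2 ->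
  is_feasible (sced_feasible fed fsc qb1 qb2 d1 d2) ->
  exists z1 z2, sced_feasible fed fsc qb1 qb2 d1 d2 z1 z2 /\
    Rmin (e1 - d1) fsc <= z1 - d1.
Proof.
  intros hS [he1 [he2 [heD hex]]] [z1 [z2 [[hz1 [hz2 [hzD hzx]]] hzs]]].
  unfold Rmin; destruct (Rle_dec (e1 - d1) fsc).
  - destruct (Rle_dec (- fsc) (e1 - d1)).
    + exists e1, e2; repeat split; lra.
    + exists z1, z2; repeat split; lra.
  - exists (d1 + fsc), (d2 - fsc); repeat split; lra.
Qed.

Lemma sced_cost_le_ratio (a1 a2 fed fsc d1 d2 x : R) :
  0 < a1 -> a1 <= a2 -> 0 < fsc -> fsc <= fed -> 0 <= d1 ->
  - d1 <= x -> x <= d2 -> x <= fed ->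
  a1 * d1 + a2 * d2 - (a2 - a1) * Rmin x fsc
  <= (a2 / a1 - (a2 - a1) * fsc / (a1 * fed)) * (a1 * d1 + a2 * d2 - (a2 - a1) * x).
Proof.
  intros ha1 ha12 hS hSF hd1 hx1 hx2 hxF.
  set (c := a2 - a1); set (K := a1 * d1 + a2 * d2).
  assert (hc : 0 <= c) by (unfold c; lra).
  assert (hK : 0 <= K - c * x) by (unfold K, c; nra).
  apply (Rmult_le_reg_l (a1 * fed)); [nra|].
  replace (a1 * fed * ((a2 / a1 - c * fsc / (a1 * fed)) * (K - c * x)))
    with ((a2 * fed - c * fsc) * (K - c * x)) by (field; lra).
  unfold Rmin; destruct (Rle_dec x fsc).
  - assert (0 <= c * (fed - fsc)) by nra.
    replace (a2 * fed) with (a1 * fed + c * fed) by (unfold c; ring); nra.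
  - assert (gap : (a2 * fed - c * fsc) * (K - c * x) - a1 * fed * (K - c * fsc)
              = a1 * c * (fed - fsc) * d1 + a2 * c * (fed - fsc) * (d2 - x)
                + a1 * c * fsc * (fed - x)) by (unfold K, c; ring).
    assert (0 <= a1 * c * (fed - fsc) * d1) by (repeat apply Rmult_le_pos; lra).
    assert (0 <= a2 * c * (fed - fsc) * (d2 - x)) by (repeat apply Rmult_le_pos; lra).
    assert (0 <= a1 * c * fsc * (fed - x)) by (repeat apply Rmult_le_pos; lra).
    lra.
Qed.

Lemma PoS_le_bound (a1 a2 fed fsc qb1 qb2 d1 d2 p : R) :
  0 < a1 -> a1 <= a2 -> 0 < fsc -> fsc <= fed ->
  in_Omega fed fsc qb1 qb2 d1 d2 -> PoS_is a1 a2 fed fsc qb1 qb2 d1 d2 p ->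
  p <= a2 / a1 - (a2 - a1) * fsc / (a1 * fed).
Proof.
  intros ha1 ha12 hS hSF [_ [_ [hd1 [hd2 [hD [_ hsc]]]]]]
    [csc [ced [[_ csc_min] [[[e1 [e2 [he ced_e]]] _] ->]]]].
  pose proof he as [he1 [he2 [heD hex]]].
  destruct (sced_export_ge_min _ _ _ _ _ _ _ _ (Rlt_le _ _ hS) he hsc)
    as [z1 [z2 [hz hzx]]].
  assert (ced_eq : ced = a1 * d1 + a2 * d2 - (a2 - a1) * (e1 - d1))
    by (rewrite <- ced_e; now apply cost_balanced).
  assert (hced : 0 < ced) by (rewrite <- ced_e; unfold cost; nra).
  assert (csc_le : csc <= a1 * d1 + a2 * d2 - (a2 - a1) * Rmin (e1 - d1) fsc).
  { apply Rle_trans with (cost a1 a2 z1 z2); [now apply csc_min|].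
    destruct hz as [[_ [_ [hzD _]]] _]; rewrite (cost_balanced _ _ d1 d2) by lra; nra. }
  apply (Rmult_le_reg_r ced); [lra|].
  unfold Rdiv at 1; rewrite Rmult_assoc, Rinv_l, Rmult_1_r by lra.
  apply Rle_trans with (1 := csc_le); rewrite ced_eq.
  apply sced_cost_le_ratio; lra.
Qed.

Lemma PoS_attained (a1 a2 fed fsc qb1 qb2 : R) :
  0 < a1 -> a1 <= a2 -> 0 < fsc -> fsc <= fed -> fed <= qb1 -> fed - fsc <= qb2 ->
  in_Omega fed fsc qb1 qb2 0 fed /\
  PoS_is a1 a2 fed fsc qb1 qb2 0 fed (a2 / a1 - (a2 - a1) * fsc / (a1 * fed)).
Proof.
  intros ha1 ha12 hS hSF hq1 hq2.
  assert (ed_opt : ed_feasible fed qb1 qb2 0 fed fed 0)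
    by (unfold ed_feasible; repeat split; lra).
  assert (sced_opt : sced_feasible fed fsc qb1 qb2 0 fed fsc (fed - fsc))
    by (unfold sced_feasible, ed_feasible; repeat split; lra).
  split.
  - unfold in_Omega; repeat split; try lra; [exists fed, 0 | exists fsc, (fed - fsc)]; auto.
  - exists (cost a1 a2 fsc (fed - fsc)), (cost a1 a2 fed 0); split; [|split].
    + apply is_opt_value_max_cheap with fed; auto.
      intros p1 p2 [[_ [_ [hpD _]]] hpx]; split; lra.
    + apply is_opt_value_max_cheap with fed; auto.
      intros p1 p2 [_ [_ [hpD hpx]]]; split; lra.
    + unfold cost; field; lra.
Qed.

Theorem theorem1 (B1 B2 fb1 fb2 a1 a2 : R)
  (hB1 : 0 < B1) (hB2 : 0 < B2) (hf1 : 0 < fb1) (hf2 : 0 < fb2)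
  (ha1 : 0 < a1) (ha12 : a1 <= a2) :
  is_lub
    (fun p => exists qb1 qb2 d1 d2,
       in_Omega (f_ed B1 B2 fb1 fb2) (f_sc fb1 fb2) qb1 qb2 d1 d2 /\
       PoS_is a1 a2 (f_ed B1 B2 fb1 fb2) (f_sc fb1 fb2) qb1 qb2 d1 d2 p)
    (a2 / a1 - (a2 - a1) * f_sc fb1 fb2 / (a1 * f_ed B1 B2 fb1 fb2))
  /\
  (forall qb1 qb2 : R,
     f_ed B1 B2 fb1 fb2 <= qb1 ->
     f_ed B1 B2 fb1 fb2 - f_sc fb1 fb2 <= qb2 ->
     in_Omega (f_ed B1 B2 fb1 fb2) (f_sc fb1 fb2) qb1 qb2 0 (f_ed B1 B2 fb1 fb2) /\
     PoS_is a1 a2 (f_ed B1 B2 fb1 fb2) (f_sc fb1 fb2) qb1 qb2 0 (f_ed B1 B2 fb1 fb2)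
       (a2 / a1 - (a2 - a1) * f_sc fb1 fb2 / (a1 * f_ed B1 B2 fb1 fb2))).
Proof.
  pose proof (f_sc_pos fb1 fb2 hf1 hf2) as hS.
  pose proof (f_sc_le_f_ed B1 B2 fb1 fb2 hB1 hB2 hf1 hf2) as hSF.
  set (fed := f_ed B1 B2 fb1 fb2) in *; set (fsc := f_sc fb1 fb2) in *.
  assert (attained := PoS_attained a1 a2 fed fsc).
  split; [split|].
  - intros p [qb1 [qb2 [d1 [d2 [hOmega hPoS]]]]].
    exact (PoS_le_bound _ _ _ _ _ _ _ _ _ ha1 ha12 hS hSF hOmega hPoS).
  - intros b hb; apply hb; exists fed, fed, 0, fed; apply attained; lra.
  - intros qb1 qb2 hq1 hq2; apply attained; lra.
Qed.
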